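(* For every integer $i\ge 1$, $\lim_{k\to\infty}\overline{\alpha}(\{1,2i,k\})=\frac{i}{2i+1}$.
   Context: For a finite set $S$ of positive integers, the distance graph $G(S)$ has vertex set $\mathbb{Z}$, with $i,j$ adjacent iff $|i-j|\in S$. The density of $A\subseteq\mathbb{Z}$ is $\delta(A)=\limsup_{N\to\infty}\frac{|A\cap[-N,N]|}{2N+1}$, and the independence ratio $\overline{\alpha}(S)$ is the supremum of $\delta(A)$ over independent sets $A$ of $G(S)$. *)

From Stdlib Require Import Reals ZArith List.
From Coquelicot Require Import Coquelicot.
Open Scope R_scope.

(* A finite set S of positive integers is given as a list of naturals.
   Vertices i, j of the distance graph G(S) on Z are adjacent iff |i - j| is in S. *)
Definition adjacent (S : list nat) (x y : Z) : Prop :=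
  In (Z.to_nat (Z.abs (x - y))) S /\ (0 < Z.abs (x - y))%Z.

Definition independent (S : list nat) (A : Z -> bool) : Prop :=
  forall x y : Z, A x = true -> A y = true -> ~ adjacent S x y.

(* |A ∩ [-N, N]| *)
Definition count_in (A : Z -> bool) (N : nat) : nat :=
  length (filter A (map (fun j : nat => (Z.of_nat j - Z.of_nat N)%Z)
                        (seq 0 (2 * N + 1)))).

Definition density (A : Z -> bool) : Rbar :=
  LimSup_seq (fun N => INR (count_in A N) / INR (2 * N + 1)).

Definition indep_ratio (S : list nat) : Rbar :=
  Lub_Rbar (fun r : R => exists A : Z -> bool,
                independent S A /\ density A = Finite r).

From Stdlib Require Import Reals ZArith List Lia Lra.
From Coquelicot Require Import Coquelicot.

(* An independent set of G({1, 2i, k}) has at most i elements among any 2i+1 consecutive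
   integers: a chosen element excludes its two neighbours at distances 1 and 2i, and the
   2i-2 integers in between pair up. Hence every density is at most i/(2i+1), whatever k.
   Conversely the (k+1)-periodic set that keeps, in each period, the odd residues modulo 2i+1
   among the first k-2i integers is independent and has density at least
   i/(2i+1) - 2i/(k+1). *)

Open Scope R_scope.
Open Scope Z_scope.

Fixpoint count_window (A : Z -> bool) (a : Z) (n : nat) : nat :=
  match n with
  | O => O
  | S n' => ((if A a then 1 else 0) + count_window A (a + 1) n')%nat
  end.

Lemma length_filter_map_seq A c s n :
  length (filter A (map (fun j : nat => Z.of_nat j - c) (seq s n)))
  = count_window A (Z.of_nat s - c) n.
Proof.
  revert s; induction n as [|n IH]; intro s; [reflexivity|].
  cbn [seq map filter count_window].
  replace (Z.of_nat s - c + 1) with (Z.of_nat (S s) - c) by lia.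
  destruct (A (Z.of_nat s - c)); cbn [length]; rewrite IH; lia.
Qed.

Lemma count_in_window A N : count_in A N = count_window A (- Z.of_nat N) (2 * N + 1).
Proof. unfold count_in. now rewrite length_filter_map_seq. Qed.

Lemma count_window_add A a n p :
  count_window A a (n + p) = (count_window A a n + count_window A (a + Z.of_nat n) p)%nat.
Proof.
  revert a; induction n as [|n IH]; intro a; cbn -[Z.of_nat].
  - now rewrite Z.add_0_r.
  - rewrite IH. replace (a + 1 + Z.of_nat n) with (a + Z.of_nat (S n)) by lia. lia.
Qed.

Lemma count_window_one A a : count_window A a 1 = (if A a then 1 else 0)%nat.
Proof. cbn. lia. Qed.

Lemma count_window_le A a n : (count_window A a n <= n)%nat.
Proof.
  revert a; induction n as [|n IH]; intro a; cbn; [lia|].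
  specialize (IH (a + 1)). destruct (A a); lia.
Qed.

Lemma count_window_ext A B a n :
  (forall x, a <= x < a + Z.of_nat n -> A x = B x) -> count_window A a n = count_window B a n.
Proof.
  revert a; induction n as [|n IH]; intros a H; cbn; [reflexivity|].
  rewrite (H a), (IH (a + 1)); [reflexivity | intros x Hx; apply H; lia | lia].
Qed.

Lemma count_window_mono A a n p : (n <= p)%nat -> (count_window A a n <= count_window A a p)%nat.
Proof. intro H. replace p with (n + (p - n))%nat by lia. rewrite count_window_add. lia. Qed.

Lemma count_window_le_blocks A p c :
  (forall a, count_window A a p <= c)%nat ->
  forall a q r, (count_window A a (q * p + r) <= q * c + r)%nat.
Proof.
  intros Hblock a q r; revert a; induction q as [|q IH]; intro a.
  - apply count_window_le.
  - replace (S q * p + r)%nat with (p + (q * p + r))%nat by lia.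
    rewrite count_window_add. specialize (Hblock a). specialize (IH (a + Z.of_nat p)). lia.
Qed.

Definition avoids (A : Z -> bool) (d : Z) : Prop :=
  forall x, A x = true -> A (x + d) = true -> False.

Lemma independent_avoids S A d :
  independent S A -> In d S -> (0 < d)%nat -> avoids A (Z.of_nat d).
Proof.
  intros HA Hd Hpos x Hx Hxd. apply (HA x (x + Z.of_nat d) Hx Hxd). split; [|lia].
  now replace (Z.to_nat (Z.abs (x - (x + Z.of_nat d)))) with d by lia.
Qed.

Lemma avoids_independent S A :
  (forall d, In d S -> (0 < d)%nat -> avoids A (Z.of_nat d)) -> independent S A.
Proof.
  intros Havoid x y Hx Hy [Hin Hpos].
  set (d := Z.to_nat (Z.abs (x - y))) in Hin.
  assert (Hd : (0 < d)%nat) by lia.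
  destruct (Z.lt_ge_cases x y).
  - apply (Havoid d Hin Hd x Hx). now replace (x + Z.of_nat d) with y by lia.
  - apply (Havoid d Hin Hd y Hy). now replace (y + Z.of_nat d) with x by lia.
Qed.

Lemma count_window_even_le A a j : avoids A 1 -> (count_window A a (2 * j) <= j)%nat.
Proof.
  intro H1; revert a; induction j as [|j IH]; intro a; [cbn; lia|].
  replace (2 * S j)%nat with (S (S (2 * j))) by lia; cbn.
  specialize (IH (a + 1 + 1)). specialize (H1 a).
  destruct (A a), (A (a + 1)); cbn in IH |- *; [exfalso; auto | lia ..].
Qed.

Lemma count_window_odd_le A i a :
  (0 < i)%nat -> avoids A 1 -> avoids A (Z.of_nat (2 * i)) ->
  (count_window A a (2 * i + 1) <= i)%nat.
Proof.
  intros Hi H1 H2i.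
  replace (2 * i + 1)%nat with (S (2 * i)) by lia; cbn [count_window].
  destruct (A a) eqn:Ha.
  2:{ pose proof (count_window_even_le A (a + 1) i H1). lia. }
  replace (2 * i)%nat with (1 + (2 * (i - 1) + 1))%nat by lia.
  rewrite !count_window_add, !count_window_one.
  pose proof (count_window_even_le A (a + 1 + Z.of_nat 1) (i - 1) H1).
  replace (a + 1 + Z.of_nat 1 + Z.of_nat (2 * (i - 1))) with (a + Z.of_nat (2 * i)) by lia.
  destruct (A (a + 1)) eqn:E1; [exfalso; eauto|].
  destruct (A (a + Z.of_nat (2 * i))) eqn:E2; [exfalso; eauto | lia].
Qed.

Section Periodic.

Variables (P : Z -> bool) (p : nat).
Hypothesis P_periodic : forall x, P (x + Z.of_nat p) = P x.

Lemma count_window_periodic_succ a : count_window P (a + 1) p = count_window P a p.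
Proof.
  pose proof (count_window_add P a p 1) as H.
  rewrite count_window_one, P_periodic in H.
  replace (p + 1)%nat with (S p) in H by lia. cbn [count_window] in H.
  destruct (P a); lia.
Qed.

Lemma count_window_periodic_shift a : count_window P a p = count_window P 0 p.
Proof.
  assert (Hup : forall b (t : nat), count_window P (b + Z.of_nat t) p = count_window P b p).
  { intros b t; induction t as [|t IH]; [now rewrite Z.add_0_r|].
    replace (b + Z.of_nat (S t)) with (b + Z.of_nat t + 1) by lia.
    now rewrite count_window_periodic_succ. }
  destruct (Z_le_dec 0 a).
  - replace a with (0 + Z.of_nat (Z.to_nat a)) by lia. apply Hup.
  - rewrite <- (Hup a (Z.to_nat (- a))). f_equal; lia.
Qed.

Lemma count_window_periodic_mul a q : count_window P a (q * p) = (q * count_window P 0 p)%nat.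
Proof.
  revert a; induction q as [|q IH]; intro a; [reflexivity|].
  replace (S q * p)%nat with (p + q * p)%nat by lia.
  rewrite count_window_add, IH, count_window_periodic_shift. lia.
Qed.

Lemma count_window_periodic_ge a n :
  (0 < p)%nat ->
  (n * count_window P 0 p <= p * count_window P a n + p * count_window P 0 p)%nat.
Proof.
  intro Hp.
  pose proof (Nat.div_mod n p ltac:(lia)). pose proof (Nat.mod_upper_bound n p ltac:(lia)).
  pose proof (count_window_mono P a (n / p * p) n ltac:(nia)) as Hmono.
  rewrite count_window_periodic_mul in Hmono. nia.
Qed.

End Periodic.

Definition odd_residues (n x : Z) : bool := Z.odd (x mod n).

Definition periodic_window (m L : Z) (P : Z -> bool) (x : Z) : bool :=
  (x mod m <? L) && P (x mod m).

Lemma odd_residues_periodic n x : odd_residues n (x + n) = odd_residues n x.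
Proof.
  unfold odd_residues. destruct (Z.eq_dec n 0) as [->|Hn].
  - now rewrite Z.add_0_r.
  - now rewrite <- (Z.mul_1_l n) at 1; rewrite Z_mod_plus_full.
Qed.

Lemma Z_odd_add_1 r : Z.odd (r + 1) = negb (Z.odd r).
Proof. now rewrite Z.add_1_r, Z.odd_succ, Z.negb_odd. Qed.

Lemma mod_add_modulus x m : (x + m) mod m = x mod m.
Proof. rewrite <- (Z.mul_1_l m) at 1. apply Z_mod_plus_full. Qed.

Lemma odd_residues_avoids_one n : 0 < n -> Z.odd n = true -> avoids (odd_residues n) 1.
Proof.
  unfold avoids, odd_residues; intros Hn Hodd x Hx Hx1.
  rewrite <- Zplus_mod_idemp_l in Hx1.
  pose proof (Z.mod_pos_bound x n Hn).
  destruct (Z.eq_dec (x mod n + 1) n) as [Hlast|Hlast].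
  - replace (x mod n) with (n - 1) in Hx by lia.
    rewrite Z.odd_sub, Hodd in Hx. discriminate.
  - rewrite Z.mod_small, Z_odd_add_1, Hx in Hx1 by lia. discriminate.
Qed.

Lemma odd_residues_avoids_pred n : 0 < n -> avoids (odd_residues n) (n - 1).
Proof.
  unfold avoids, odd_residues; intros Hn x Hx Hxn.
  pose proof (Z.mod_pos_bound x n Hn).
  destruct (Z.eq_dec (x mod n) 0) as [Hzero|Hzero]; [now rewrite Hzero in Hx|].
  replace (x + (n - 1)) with (x - 1 + n) in Hxn by lia.
  rewrite mod_add_modulus, <- Zminus_mod_idemp_l, Z.mod_small in Hxn by lia.
  rewrite <- (Z.sub_add 1 (x mod n)), Z_odd_add_1, Hxn in Hx. discriminate.
Qed.

Lemma count_window_Zodd_even a j : count_window Z.odd a (2 * j) = j.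
Proof.
  revert a; induction j as [|j IH]; intro a; [reflexivity|].
  replace (2 * S j)%nat with (S (S (2 * j))) by lia; cbn [count_window].
  rewrite IH, Z_odd_add_1. destruct (Z.odd a); cbn; lia.
Qed.

Lemma count_window_odd_residues i : count_window (odd_residues (Z.of_nat (2 * i + 1))) 0 (2 * i + 1) = i.
Proof.
  rewrite (count_window_ext _ Z.odd).
  - rewrite count_window_add, count_window_Zodd_even, count_window_one.
    replace (0 + Z.of_nat (2 * i)) with (0 + 2 * Z.of_nat i) by lia.
    rewrite Z.add_0_l, Z.odd_mul. cbn. lia.
  - intros x Hx. unfold odd_residues. now rewrite Z.mod_small by lia.
Qed.

Lemma periodic_window_periodic m L P x : periodic_window m L P (x + m) = periodic_window m L P x.
Proof. unfold periodic_window. now rewrite mod_add_modulus. Qed.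

Lemma periodic_window_avoids m L P d :
  0 < m -> 0 <= d -> L + d <= m -> avoids P d -> avoids (periodic_window m L P) d.
Proof.
  unfold avoids, periodic_window; intros Hm Hd HLd HP x Hx Hxd.
  apply andb_prop in Hx as [HxL HPx], Hxd as [_ HPxd]. apply Z.ltb_lt in HxL.
  pose proof (Z.mod_pos_bound x m Hm).
  rewrite <- Zplus_mod_idemp_l, Z.mod_small in HPxd by lia.
  exact (HP _ HPx HPxd).
Qed.

(* Adding [m - 1] is subtracting [1] modulo the period [m]. *)
Lemma periodic_window_avoids_wrap m L P :
  0 < m -> L < m -> avoids P 1 -> avoids (periodic_window m L P) (m - 1).
Proof.
  unfold avoids, periodic_window; intros Hm HLm HP x Hx Hxm.
  apply andb_prop in Hx as [HxL HPx], Hxm as [HxmL HPxm]. apply Z.ltb_lt in HxL, HxmL.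
  pose proof (Z.mod_pos_bound x m Hm).
  rewrite <- Zplus_mod_idemp_l in HxmL, HPxm.
  replace (x mod m + (m - 1)) with (x mod m - 1 + m) in HxmL, HPxm by lia.
  rewrite mod_add_modulus in HxmL, HPxm.
  destruct (Z.eq_dec (x mod m) 0) as [Hzero|Hzero].
  - rewrite Hzero in HxmL. replace (0 - 1) with (m - 1 + -1 * m) in HxmL by ring.
    rewrite Z_mod_plus_full, Z.mod_small in HxmL by lia. lia.
  - rewrite Z.mod_small in HPxm by lia.
    apply (HP _ HPxm). now rewrite Z.sub_add.
Qed.

Lemma count_window_periodic_window (m L : nat) P :
  (L <= m)%nat ->
  count_window (periodic_window (Z.of_nat m) (Z.of_nat L) P) 0 L = count_window P 0 L.
Proof.
  intro HLm. apply count_window_ext. intros x Hx. unfold periodic_window.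
  rewrite Z.mod_small by lia. now replace (x <? Z.of_nat L) with true by (symmetry; apply Z.ltb_lt; lia).
Qed.

(* Each period [0, k] keeps the odd residues modulo [2i+1] of [0, k-2i); since the period is
   [k+1], the difference [k] acts as a wrap-around difference [1]. *)
Definition near_optimal_set (i k : nat) : Z -> bool :=
  periodic_window (Z.of_nat (k + 1)) (Z.of_nat (k - 2 * i)) (odd_residues (Z.of_nat (2 * i + 1))).

Lemma near_optimal_set_independent i k :
  (2 * i <= k)%nat -> independent (1%nat :: (2 * i)%nat :: k :: nil) (near_optimal_set i k).
Proof.
  intro Hk. unfold near_optimal_set.
  assert (Hn : 0 < Z.of_nat (2 * i + 1)) by lia.
  assert (Hone : avoids (odd_residues (Z.of_nat (2 * i + 1))) 1).
  { apply odd_residues_avoids_one; [exact Hn|].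
    replace (Z.of_nat (2 * i + 1)) with (1 + 2 * Z.of_nat i) by lia.
    now rewrite Z.odd_add_mul_2. }
  apply avoids_independent; intros d Hd Hpos.
  destruct Hd as [<- | [<- | [<- | []]]].
  - apply periodic_window_avoids; [lia .. | exact Hone].
  - replace (Z.of_nat (2 * i)) with (Z.of_nat (2 * i + 1) - 1) by lia.
    apply periodic_window_avoids; [lia .. |]. now apply odd_residues_avoids_pred.
  - replace (Z.of_nat k) with (Z.of_nat (k + 1) - 1) by lia.
    apply periodic_window_avoids_wrap; [lia .. | exact Hone].
Qed.

Lemma near_optimal_set_periodic i k x :
  near_optimal_set i k (x + Z.of_nat (k + 1)) = near_optimal_set i k x.
Proof. apply periodic_window_periodic. Qed.

Lemma near_optimal_set_count_ge i k :
  (2 * i <= k)%nat ->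
  ((k - 2 * i) * i <= (2 * i + 1) * count_window (near_optimal_set i k) 0 (k + 1) + (2 * i + 1) * i)%nat.
Proof.
  intro Hk.
  pose proof (count_window_periodic_ge _ _ (odd_residues_periodic (Z.of_nat (2 * i + 1)))
                0 (k - 2 * i) ltac:(lia)) as Hge.
  rewrite count_window_odd_residues in Hge.
  pose proof (count_window_mono (near_optimal_set i k) 0 (k - 2 * i) (k + 1) ltac:(lia)) as Hmono.
  unfold near_optimal_set in Hmono. rewrite count_window_periodic_window in Hmono by lia.
  unfold near_optimal_set. nia.
Qed.

Lemma count_window_independent_le i k A a :
  (0 < i)%nat -> independent (1%nat :: (2 * i)%nat :: k :: nil) A ->
  (count_window A a (2 * i + 1) <= i)%nat.
Proof.
  intros Hi HA. apply count_window_odd_le; [exact Hi | ..].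
  - apply (independent_avoids _ _ 1 HA); cbn; auto.
  - apply (independent_avoids _ _ (2 * i) HA); cbn; [auto | lia].
Qed.

Close Scope Z_scope.

Lemma is_lim_seq_div_INR (C : R) (f : nat -> nat) :
  (forall n, (n <= f n)%nat) -> is_lim_seq (fun n => C / INR (f n)) 0.
Proof.
  intro Hf. apply is_lim_seq_div with (l1 := C) (l2 := p_infty).
  - apply is_lim_seq_const.
  - apply is_lim_seq_le_p_loc with INR; [|apply is_lim_seq_INR].
    exists O. intros n _. apply le_INR, Hf.
  - discriminate.
  - apply is_Rbar_div_p_infty.
Qed.

Lemma LimSup_seq_le_lim (u w : nat -> R) (l : Rbar) :
  (forall n, u n <= w n) -> is_lim_seq w l -> Rbar_le (LimSup_seq u) l.
Proof.
  intros Huw Hw. rewrite <- (is_LimSup_seq_unique w l (is_lim_LimSup_seq w l Hw)).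
  apply LimSup_le. exists O. auto.
Qed.

Lemma lim_le_LimSup_seq (u w : nat -> R) (l : Rbar) :
  (forall n, w n <= u n) -> is_lim_seq w l -> Rbar_le l (LimSup_seq u).
Proof.
  intros Hwu Hw. rewrite <- (is_LimSup_seq_unique w l (is_lim_LimSup_seq w l Hw)).
  apply LimSup_le. exists O. auto.
Qed.

Lemma density_le_of_window_bound A (p c : nat) :
  (0 < p)%nat -> (forall a, (count_window A a p <= c)%nat) ->
  Rbar_le (density A) (INR c / INR p).
Proof.
  intros Hp Hblock.
  assert (Hlim : is_lim_seq (fun N => INR c / INR p + INR p / INR (2 * N + 1)) (INR c / INR p + 0)).
  { apply is_lim_seq_plus'; [apply is_lim_seq_const | apply is_lim_seq_div_INR; lia]. }
  rewrite Rplus_0_r in Hlim. refine (LimSup_seq_le_lim _ _ _ _ Hlim).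
  intro N. rewrite count_in_window.
  set (M := (2 * N + 1)%nat).
  pose proof (Nat.div_mod M p ltac:(lia)). pose proof (Nat.mod_upper_bound M p ltac:(lia)).
  pose proof (count_window_le_blocks A p c Hblock (- Z.of_nat N) (M / p) (M mod p)) as Hc.
  replace (M / p * p + M mod p)%nat with M in Hc by lia.
  assert (Hnat : (p * count_window A (- Z.of_nat N) M <= c * M + p * p)%nat) by nia.
  apply le_INR in Hnat. rewrite !plus_INR, !mult_INR in Hnat.
  assert (0 < INR M) by (apply lt_0_INR; lia). assert (0 < INR p) by (apply lt_0_INR; lia).
  apply Rmult_le_reg_r with (INR M * INR p); [nra|].
  replace (INR (count_window A (- Z.of_nat N) M) / INR M * (INR M * INR p))
    with (INR p * INR (count_window A (- Z.of_nat N) M)) by (field; lra).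
  replace ((INR c / INR p + INR p / INR M) * (INR M * INR p)) with (INR c * INR M + INR p * INR p)
    by (field; lra).
  exact Hnat.
Qed.

Lemma density_ge_of_periodic P (p : nat) :
  (0 < p)%nat -> (forall x, P (x + Z.of_nat p)%Z = P x) ->
  Rbar_le (INR (count_window P 0 p) / INR p) (density P).
Proof.
  intros Hp HP. set (c := count_window P 0 p).
  assert (Hlim : is_lim_seq (fun N => INR c / INR p - INR c / INR (2 * N + 1)) (INR c / INR p - 0)).
  { apply is_lim_seq_minus'; [apply is_lim_seq_const | apply is_lim_seq_div_INR; lia]. }
  rewrite Rminus_0_r in Hlim. refine (lim_le_LimSup_seq _ _ _ _ Hlim).
  intro N. rewrite count_in_window.
  set (M := (2 * N + 1)%nat).
  pose proof (count_window_periodic_ge P p HP (- Z.of_nat N) M Hp) as Hnat. fold c in Hnat.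
  apply le_INR in Hnat. rewrite !plus_INR, !mult_INR in Hnat.
  assert (0 < INR M) by (apply lt_0_INR; lia). assert (0 < INR p) by (apply lt_0_INR; lia).
  apply Rmult_le_reg_r with (INR M * INR p); [nra|].
  replace ((INR c / INR p - INR c / INR M) * (INR M * INR p)) with (INR M * INR c - INR p * INR c)
    by (field; lra).
  replace (INR (count_window P (- Z.of_nat N) M) / INR M * (INR M * INR p))
    with (INR p * INR (count_window P (- Z.of_nat N) M)) by (field; lra).
  lra.
Qed.

Lemma near_optimal_set_density_ge i k :
  (2 * i <= k)%nat ->
  Rbar_le (INR i / INR (2 * i + 1) - INR (2 * i) / INR (k + 1)) (density (near_optimal_set i k)).
Proof.
  intro Hk.
  refine (Rbar_le_trans _ _ _ _ (density_ge_of_periodic _ (k + 1) ltac:(lia)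
                                   (near_optimal_set_periodic i k))).
  set (c := count_window (near_optimal_set i k) 0 (k + 1)).
  pose proof (near_optimal_set_count_ge i k Hk) as Hnat. fold c in Hnat.
  apply le_INR in Hnat.
  rewrite ?plus_INR, ?mult_INR, minus_INR, ?plus_INR, ?mult_INR in Hnat by lia.
  rewrite !plus_INR, !mult_INR.
  change (INR 1) with 1 in *. replace (INR 2) with 2 in * by (cbn; ring).
  pose proof (pos_INR i). pose proof (pos_INR k).
  apply Rmult_le_reg_r with ((2 * INR i + 1) * (INR k + 1)); [nra|].
  replace ((INR i / (2 * INR i + 1) - 2 * INR i / (INR k + 1)) * ((2 * INR i + 1) * (INR k + 1)))
    with (INR i * (INR k + 1) - 2 * INR i * (2 * INR i + 1)) by (field; lra).
  replace (INR c / (INR k + 1) * ((2 * INR i + 1) * (INR k + 1))) with ((2 * INR i + 1) * INR c)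
    by (field; lra).
  lra.
Qed.

Lemma Rbar_le_between (a b : R) (x : Rbar) :
  Rbar_le a x -> Rbar_le x b -> x = Finite (real x) /\ a <= real x <= b.
Proof. destruct x; cbn; tauto. Qed.

Lemma indep_ratio_between i k :
  (0 < i)%nat -> (2 * i <= k)%nat ->
  INR i / INR (2 * i + 1) - INR (2 * i) / INR (k + 1)
  <= real (indep_ratio (1%nat :: (2 * i)%nat :: k :: nil))
  <= INR i / INR (2 * i + 1).
Proof.
  intros Hi Hk. unfold indep_ratio.
  match goal with |- context [Lub_Rbar ?E] => destruct (Lub_Rbar_correct E) as [Hub Hleast] end.
  assert (Hdensity_le : forall A, independent (1%nat :: (2 * i)%nat :: k :: nil) A ->
                          Rbar_le (density A) (INR i / INR (2 * i + 1))).
  { intros A HA. apply density_le_of_window_bound; [lia|].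
    intro a. now apply (count_window_independent_le i k). }
  destruct (Rbar_le_between _ _ _ (near_optimal_set_density_ge i k Hk)
              (Hdensity_le _ (near_optimal_set_independent i k Hk))) as [Hfin Hr].
  apply Rbar_le_between.
  - eapply Rbar_le_trans with (real (density (near_optimal_set i k))); [exact (proj1 Hr)|].
    apply Hub. exists (near_optimal_set i k). split; [exact (near_optimal_set_independent i k Hk) | exact Hfin].
  - apply Hleast. intros r [A [HA HdA]]. rewrite <- HdA. now apply Hdensity_le.
Qed.

Theorem theorem24 (i : nat) (hi : (1 <= i)%nat) :
  is_lim_seq (fun k : nat => real (indep_ratio (1%nat :: (2 * i)%nat :: k :: nil)))
             (INR i / INR (2 * i + 1)).
Proof.
  set (c := INR i / INR (2 * i + 1)).
  apply is_lim_seq_le_le_loc with (u := fun k => c - INR (2 * i) / INR (k + 1)) (w := fun _ => c).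
  - exists (2 * i)%nat. intros k Hk. now apply indep_ratio_between.
  - replace (Finite c) with (Finite (c - 0)) by (f_equal; ring).
    apply is_lim_seq_minus'; [apply is_lim_seq_const | apply is_lim_seq_div_INR; lia].
  - apply is_lim_seq_const.
Qed.
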